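(* Let $G$ be a compact Lie group with normalized Haar measure, let $\Gamma$ be any finite graph with vertex set $\{1,\ldots,k\}$ that is a subgraph of the complete graph on $k$ vertices (no loops or multiple edges), and assign to each edge $e=\{i,j\}$, $i<j$, a finite-dimensional unitary representation $\rho_e$ of $G$. Then the evaluation of the corresponding relativistic spin network with symmetry $G\times G$, $$\int_{G^k}\prod_{e=\{i,j\},\,i<j}\chi_{\rho_e}(g_i g_j^{-1})\,dg_1\cdots dg_k,$$ is a non-negative real number. In particular, this holds for the relativistic (Barrett–Crane) spin networks with symmetry group $\mathrm{Spin}(4)\cong SU(2)\times SU(2)$ (or $SO(4)$) on any such graph.
   Context: $\chi_\rho(g)=\mathrm{tr}\,\rho(g)$. A relativistic spin network with symmetry $G\times G$ is a graph whose edges are labeled by representations of $G\times G$ of the form $V\otimes V^\ast$ ($V$ a representation of $G$) and whose vertices are labeled by the intertwiner given by a single integration over $G$ (the integral presentation of the Barrett–Crane intertwiner, $\int_G \bigotimes_{e\ni v}\rho_e(g)\,dg$ with the edge factors $V_e$, resp. $V_e^\ast$, at the two ends of the edge); with these conventions, contracting the intertwiners along the edges yields exactly the integral displayed in the claim, where $\rho_e$ is the representation $V$ labeling edge $e$. For $G=SU(2)$, the balanced representations $V\otimes V$ of $\mathrm{Spin}(4)$ are isomorphic to $V\otimes V^\ast$. *)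

From HB Require Import structures.
From mathcomp Require Import all_boot all_order all_algebra.
From mathcomp Require Import all_classical all_reals all_analysis.
From mathcomp Require Import complex.

Set Implicit Arguments.
Unset Strict Implicit.
Unset Printing Implicit Defensive.

Import Order.TTheory GRing.Theory Num.Theory.
Import numFieldNormedType.Exports.
Local Open Scope classical_set_scope.
Local Open Scope ring_scope.

Definition is_group (G : Type) (mul : G -> G -> G) (inv : G -> G) (one : G) :=
  [/\ associative mul, left_id one mul, right_id one mul,
      (forall x, mul (inv x) x = one) & (forall x, mul x (inv x) = one)].

Definition is_compact_topological_group (G : ptopologicalType)
    (mul : G -> G -> G) (inv : G -> G) (one : G) :=
  [/\ is_group mul inv one,
      continuous (fun p : G * G => mul p.1 p.2),
      continuous inv,
      compact [set: G] & hausdorff_space G].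

Definition adjmx (R : rcfType) (m n : nat) (M : 'M[R[i]]_(m, n)) : 'M[R[i]]_(n, m) :=
  map_mx Num.conj M^T.

Definition unitary_mx (R : rcfType) (n : nat) (M : 'M[R[i]]_n) :=
  M *m adjmx M = 1%:M.

(* continuity of a matrix-valued map (product topology on the entries,
   C = R^2 with its usual topology) *)
Definition mx_continuous (R : realType) (G : ptopologicalType) (m n : nat)
    (f : G -> 'M[R[i]]_(m, n)) :=
  forall (a : 'I_m) (b : 'I_n),
    continuous (fun g => complex.Re (f g a b)) /\ continuous (fun g => complex.Im (f g a b)).

Definition unitary_rep (R : realType) (G : ptopologicalType)
    (mul : G -> G -> G) (one : G) (n : nat) (rho : G -> 'M[R[i]]_n) :=
  [/\ (forall g h, rho (mul g h) = rho g *m rho h),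
      rho one = 1%:M,
      (forall g, unitary_mx (rho g)) & mx_continuous rho].

Definition character (R : rcfType) (G : Type) (n : nat)
    (rho : G -> 'M[R[i]]_n) (g : G) : R[i] := \tr (rho g).

(* A compact Lie group: a compact Hausdorff topological group which is
   (topologically) isomorphic to a closed subgroup of some U(n), i.e. which
   admits a faithful continuous finite-dimensional unitary representation. *)
Definition is_compact_Lie_group (R : realType) (G : ptopologicalType)
    (mul : G -> G -> G) (inv : G -> G) (one : G) :=
  is_compact_topological_group mul inv one /\
  exists (n : nat) (sigma : G -> 'M[R[i]]_n),
    unitary_rep mul one sigma /\ injective sigma.

Notation borelG G := (g_sigma_algebraType (@open G)).

Definition is_normalized_Haar (R : realType) (G : ptopologicalType)
    (mul : G -> G -> G) (mu : probability (borelG G) R) :=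
  forall (h : G) (A : set (borelG G)),
    measurable A -> mu (mul h @^-1` A) = mu A.

Definition cintegral (R : realType) (G : ptopologicalType)
    (mu : probability (borelG G) R) (f : G -> R[i]) : R[i] :=
  Complex (Rintegral mu setT (fun x => complex.Re (f x)))
          (Rintegral mu setT (fun x => complex.Im (f x))).

Definition tcons (G : Type) (k : nat) (x : G) (h : 'I_k -> G) : 'I_k.+1 -> G :=
  fun i => if unlift ord0 i is Some j then h j else x.

(* integral over G^k (as the iterated integral dg_1 ... dg_k; equal to the
   integral w.r.t. the product measure by Fubini for the continuous integrands
   considered here) *)
Fixpoint integral_Gk (R : realType) (G : ptopologicalType)
    (mu : probability (borelG G) R) (one : G) (k : nat) :
    (('I_k -> G) -> R[i]) -> R[i] :=
  match k with
  | 0 => fun F => F (fun _ => one)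
  | k'.+1 => fun F =>
      cintegral mu (fun x => integral_Gk mu one (fun h => F (tcons x h)))
  end.

Definition spin_network_eval (R : realType) (G : ptopologicalType)
    (mul : G -> G -> G) (inv : G -> G) (one : G)
    (mu : probability (borelG G) R) (k : nat) (E : {set 'I_k * 'I_k})
    (d : 'I_k * 'I_k -> nat) (rho : forall e : 'I_k * 'I_k, G -> 'M[R[i]]_(d e))
    : R[i] :=
  integral_Gk mu one (fun g : 'I_k -> G =>
    \prod_(e in E) character (rho e) (mul (g e.1) (inv (g e.2)))).

(* Write F for the integrand and h^-1 g for the componentwise product in G^k.
   For a unitary representation, chi((h_i^-1 g_i) (h_j^-1 g_j)^-1) = tr (M(g) M(h)^* )
   with M(g) = rho(g_i) rho(g_j)^*, so F(h^-1 g) = sum_p F_p(g) conj (F_p(h)) for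
   finitely many functions F_p: the kernel (g, h) |-> F(h^-1 g) is of positive type
   and finite rank. Left invariance of the Haar measure gives, for every h,
   int F = int_g F(h^-1 g) = sum_p conj (F_p(h)) int F_p, and integrating once more
   in h yields int F = sum_p |int F_p|^2 >= 0.
   Linearity, conjugation and invariance of the iterated integral are only needed
   for finite sums of products of continuous functions of one coordinate each, where
   they reduce to the one-variable case. Neither the ordering i < j of the edges nor
   the Lie structure of G plays a role. *)

From HB Require Import structures.
From mathcomp Require Import all_boot all_order all_algebra.
From mathcomp Require Import all_classical all_reals all_analysis.
From mathcomp Require Import complex measurable_realfun ring.

Set Implicit Arguments.
Unset Strict Implicit.
Unset Printing Implicit Defensive.

Import Order.TTheory GRing.Theory Num.Theory.
Import numFieldNormedType.Exports.
Local Open Scope classical_set_scope.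
Local Open Scope ring_scope.

Notation Re := complex.Re.
Notation Im := complex.Im.

Section ComplexParts.
Variable R : rcfType.
Implicit Types x y : R[i].

Lemma complexP x y : Re x = Re y -> Im x = Im y -> x = y.
Proof. by case: x; case: y => /= a b c d -> ->. Qed.

Lemma ReD x y : Re (x + y) = Re x + Re y. Proof. by case: x; case: y. Qed.
Lemma ImD x y : Im (x + y) = Im x + Im y. Proof. by case: x; case: y. Qed.
Lemma ReM x y : Re (x * y) = Re x * Re y - Im x * Im y.
Proof. by case: x; case: y. Qed.
Lemma ImM x y : Im (x * y) = Re x * Im y + Im x * Re y.
Proof. by case: x; case: y. Qed.
Lemma ReJ x : Re (Num.conj x) = Re x. Proof. by case: x. Qed.
Lemma ImJ x : Im (Num.conj x) = - Im x. Proof. by case: x. Qed.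

End ComplexParts.

Section BorelMeasurability.
Variable G : ptopologicalType.

Lemma continuous_borel_measurable (H : ptopologicalType) (f : G -> H) :
  continuous f -> measurable_fun [set: borelG G] (f : borelG G -> borelG H).
Proof.
move=> cf; apply: (@measurability _ _ (borelG G) (borelG H) _ _ (@open H)) => //.
move=> _ [U oU <-].
by apply: sub_sigma_algebra; rewrite setTI; apply: (proj1 (continuousP f) cf).
Qed.

Lemma continuous_borel_measurable_real (R : realType) (f : G -> R) :
  continuous f -> measurable_fun [set: borelG G] f.
Proof.
move=> cf; apply: (measurability _ (RGenOpens.measurableE R)).
move=> _ [_ [a [b ->] <-]]; apply: sub_sigma_algebra.
by rewrite setTI; apply: (proj1 (continuousP f) cf); apply: interval_open.
Qed.

End BorelMeasurability.

Section ComplexContinuity.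
Variables (R : realType) (G : ptopologicalType).

Definition ccontinuous (f : G -> R[i]) :=
  continuous (fun x => Re (f x)) /\ continuous (fun x => Im (f x)).

Record ccfun := CCFun { ccfun_val :> G -> R[i]; ccfunP : ccontinuous ccfun_val }.

Lemma ccontinuous_cst c : ccontinuous (fun _ => c).
Proof. by split=> x; apply: cst_continuous. Qed.

Lemma ccontinuousD (f g : G -> R[i]) :
  ccontinuous f -> ccontinuous g -> ccontinuous (fun x => f x + g x).
Proof.
move=> [f1 f2] [g1 g2]; split=> x.
- by under eq_fun do rewrite ReD; apply: cvgD; [apply: f1 | apply: g1].
- by under eq_fun do rewrite ImD; apply: cvgD; [apply: f2 | apply: g2].
Qed.

Lemma ccontinuousM (f g : G -> R[i]) :
  ccontinuous f -> ccontinuous g -> ccontinuous (fun x => f x * g x).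
Proof.
move=> [f1 f2] [g1 g2]; split=> x.
- under eq_fun do rewrite ReM.
  by apply: cvgB; apply: cvgM; [apply: f1 | apply: g1 | apply: f2 | apply: g2].
- under eq_fun do rewrite ImM.
  by apply: cvgD; apply: cvgM; [apply: f1 | apply: g2 | apply: f2 | apply: g1].
Qed.

Lemma ccontinuousJ (f : G -> R[i]) :
  ccontinuous f -> ccontinuous (fun x => Num.conj (f x)).
Proof.
move=> [f1 f2]; split=> x.
- by under eq_fun do rewrite ReJ; apply: f1.
- by under eq_fun do rewrite ImJ; apply: cvgN; apply: f2.
Qed.

Lemma ccontinuous_comp (f : G -> R[i]) (phi : G -> G) :
  ccontinuous f -> continuous phi -> ccontinuous (fun x => f (phi x)).
Proof.
move=> [f1 f2] cphi; split=> x.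
- exact: (continuous_comp (cphi x) (f1 (phi x))).
- exact: (continuous_comp (cphi x) (f2 (phi x))).
Qed.

Lemma ccontinuous_sum (T : Type) (r : seq T) (F : T -> G -> R[i]) :
  (forall t, ccontinuous (F t)) -> ccontinuous (fun x => \sum_(t <- r) F t x).
Proof.
move=> cF; elim: r => [|t r IHr].
  by under eq_fun do rewrite big_nil; apply: ccontinuous_cst.
by under eq_fun do rewrite big_cons; apply: ccontinuousD.
Qed.

End ComplexContinuity.

Section CompactIntegral.
Variables (R : realType) (G : ptopologicalType) (mu : probability (borelG G) R).
Hypothesis compactG : compact [set: G].

Lemma continuous_integrable (f : G -> R) :
  continuous f -> mu.-integrable setT (EFin \o f).
Proof.
move=> cf; have mf : measurable_fun [set: borelG G] (EFin \o f).
  by apply/measurable_EFinP; apply: continuous_borel_measurable_real.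
apply/integrableP; split => //.
have /compact_bounded[M [_ HM]] : compact (f @` [set: G]).
  by apply: continuous_compact => //; apply: continuous_subspaceT.
apply: (@le_lt_trans _ _ ((`|M| + 1)%:E * mu setT)%E).
  apply: integral_le_bound => //.
  apply: aeW => x _ /=; rewrite lee_fin; apply: HM; last by exists x.
  by rewrite ltr_pwDr // ler_norm.
by rewrite probability_setT mule1 ltry.
Qed.

Lemma Rintegral_comp_preserving (phi : G -> G) (u : G -> R) :
  continuous phi ->
  (forall A : set (borelG G), measurable A -> mu (phi @^-1` A) = mu A) ->
  continuous u -> Rintegral mu setT (fun x => u (phi x)) = Rintegral mu setT u.
Proof.
move=> cphi mu_phi cu.
have /integrableP[mEu _] := continuous_integrable cu.
have iuphi : mu.-integrable (phi @^-1` [set: borelG G]) ((EFin \o u) \o phi).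
  rewrite preimage_setT; apply: (continuous_integrable (f := fun x => u (phi x))).
  by move=> x; apply: (continuous_comp (cphi x) (cu (phi x))).
have mphi := continuous_borel_measurable cphi.
have := integral_pushforward mphi mEu iuphi measurableT.
rewrite preimage_setT /Rintegral => push_u; congr fine.
apply: (etrans (esym push_u)).
by apply: eq_measure_integral => A mA _; exact: mu_phi.
Qed.

Implicit Types f g : G -> R[i].

Lemma cintegral_cst c : cintegral mu (fun _ => c) = c.
Proof.
have Rint_cst (r : R) : Rintegral mu setT (fun _ => r) = r.
  by rewrite Rintegral_cst // (congr1 fine (probability_setT mu)) mulr1.
by apply: complexP; rewrite /cintegral /= Rint_cst.
Qed.

Lemma cintegralD f g : ccontinuous f -> ccontinuous g ->
  cintegral mu (fun x => f x + g x) = cintegral mu f + cintegral mu g.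
Proof.
move=> [f1 f2] [g1 g2]; apply: complexP; rewrite /cintegral /=.
- by under eq_Rintegral do rewrite ReD; rewrite RintegralD //; apply: continuous_integrable.
- by under eq_Rintegral do rewrite ImD; rewrite RintegralD //; apply: continuous_integrable.
Qed.

Lemma cintegralZl c f : ccontinuous f ->
  cintegral mu (fun x => c * f x) = c * cintegral mu f.
Proof.
move=> [f1 f2].
have iRe := continuous_integrable f1; have iIm := continuous_integrable f2.
have iZ (a : R) (u : G -> R) : continuous u ->
    mu.-integrable setT (EFin \o (fun x => a * u x)).
  by move=> cu; apply: continuous_integrable => x; apply: cvgM; [apply: cvg_cst | apply: cu].
apply: complexP; rewrite /cintegral /=.
- by under eq_Rintegral do rewrite ReM; rewrite [RHS]ReM RintegralB ?RintegralZl //; apply: iZ.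
- by under eq_Rintegral do rewrite ImM; rewrite [RHS]ImM RintegralD ?RintegralZl //; apply: iZ.
Qed.

Lemma cintegralJ f : ccontinuous f ->
  cintegral mu (fun x => Num.conj (f x)) = Num.conj (cintegral mu f).
Proof.
move=> [f1 f2]; apply: complexP; rewrite /cintegral /=.
- by under eq_Rintegral do rewrite ReJ.
- under eq_Rintegral do rewrite ImJ.
  by rewrite -[RHS]mulN1r -RintegralZl //; [apply: eq_Rintegral => x _; rewrite mulN1r
    | apply: continuous_integrable].
Qed.

Lemma cintegral_sum (T : Type) (r : seq T) (F : T -> G -> R[i]) :
  (forall t, ccontinuous (F t)) ->
  cintegral mu (fun x => \sum_(t <- r) F t x) = \sum_(t <- r) cintegral mu (F t).
Proof.
move=> cF; elim: r => [|t r IHr].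
  by under eq_fun do rewrite big_nil; rewrite big_nil cintegral_cst.
under eq_fun do rewrite big_cons.
by rewrite cintegralD ?IHr ?big_cons //; apply: ccontinuous_sum.
Qed.

Lemma cintegral_comp_preserving (phi : G -> G) f :
  continuous phi ->
  (forall A : set (borelG G), measurable A -> mu (phi @^-1` A) = mu A) ->
  ccontinuous f -> cintegral mu (fun x => f (phi x)) = cintegral mu f.
Proof.
move=> cphi mu_phi [f1 f2]; apply: complexP; rewrite /cintegral /=.
- exact: (Rintegral_comp_preserving (u := fun x => Re (f x))).
- exact: (Rintegral_comp_preserving (u := fun x => Im (f x))).
Qed.

End CompactIntegral.

Section SeparableFunctions.
Variables (R : realType) (G : ptopologicalType) (k : nat).
Local Notation ccfun := (ccfun R G).
Implicit Types F : ('I_k -> G) -> R[i].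

Definition ccfun_cst (c : R[i]) : ccfun := CCFun (ccontinuous_cst G c).

Definition sepsum (s : seq (R[i] * ('I_k -> ccfun))) (g : 'I_k -> G) : R[i] :=
  \sum_(p <- s) p.1 * \prod_(v < k) p.2 v (g v).

Definition separable_fun F := exists s, F =1 sepsum s.

Lemma separable_fun_eq F F' : F =1 F' -> separable_fun F' -> separable_fun F.
Proof. by move=> eqF [s Hs]; exists s => g; rewrite eqF Hs. Qed.

Lemma separable_fun_cst c : separable_fun (fun _ => c).
Proof.
exists [:: (c, fun _ => ccfun_cst 1)] => g.
by rewrite /sepsum big_seq1 /= big1 ?mulr1.
Qed.

Lemma separable_fun_coord (v : 'I_k) (f : ccfun) : separable_fun (fun g => f (g v)).
Proof.
exists [:: (1, fun w => if w == v then f else ccfun_cst 1)] => g.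
rewrite /sepsum big_seq1 /= mul1r (bigD1 v) //= eqxx big1 ?mulr1 //.
by move=> w /negbTE ->.
Qed.

Lemma separable_funD F1 F2 :
  separable_fun F1 -> separable_fun F2 -> separable_fun (fun g => F1 g + F2 g).
Proof. by move=> [s1 H1] [s2 H2]; exists (s1 ++ s2) => g; rewrite H1 H2 /sepsum big_cat. Qed.

Lemma separable_funZl c F : separable_fun F -> separable_fun (fun g => c * F g).
Proof.
move=> [s H]; exists [seq (c * p.1, p.2) | p <- s] => g.
by rewrite H /sepsum big_map mulr_sumr; apply: eq_bigr => p _; rewrite mulrA.
Qed.

Lemma separable_funM F1 F2 :
  separable_fun F1 -> separable_fun F2 -> separable_fun (fun g => F1 g * F2 g).
Proof.
move=> [s1 H1] [s2 H2].
exists [seq (p.1 * q.1, fun v => CCFun (ccontinuousM (ccfunP (p.2 v)) (ccfunP (q.2 v))))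
       | p <- s1, q <- s2] => g.
rewrite H1 H2 /sepsum big_allpairs_dep mulr_suml; apply: eq_bigr => p _.
by rewrite mulr_sumr; apply: eq_bigr => q _ /=; rewrite big_split /=; ring.
Qed.

Lemma separable_funJ F : separable_fun F -> separable_fun (fun g => Num.conj (F g)).
Proof.
move=> [s H]; exists [seq (Num.conj p.1, fun v => CCFun (ccontinuousJ (ccfunP (p.2 v))))
                     | p <- s] => g.
rewrite H /sepsum big_map rmorph_sum; apply: eq_bigr => p _ /=.
by rewrite rmorphM rmorph_prod.
Qed.

Lemma separable_fun_sum (T : Type) (r : seq T) (P : pred T) (Fs : T -> ('I_k -> G) -> R[i]) :
  (forall t, P t -> separable_fun (Fs t)) ->
  separable_fun (fun g => \sum_(t <- r | P t) Fs t g).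
Proof.
move=> sepF; elim: r => [|t r IHr].
  by apply: separable_fun_eq (separable_fun_cst 0) => g; rewrite big_nil.
case Pt: (P t).
  by apply: separable_fun_eq (separable_funD (sepF t Pt) IHr) => g; rewrite big_cons Pt.
by apply: separable_fun_eq IHr => g; rewrite big_cons Pt.
Qed.

Definition gram_kernel (K : ('I_k -> G) -> ('I_k -> G) -> R[i]) :=
  exists s : seq {F | separable_fun F},
    forall g h, K g h = \sum_(p <- s) sval p g * Num.conj (sval p h).

Lemma gram_kernel_eq (K K' : ('I_k -> G) -> ('I_k -> G) -> R[i]) :
  (forall g h, K g h = K' g h) -> gram_kernel K' -> gram_kernel K.
Proof. by move=> eqK [s Hs]; exists s => g h; rewrite eqK Hs. Qed.

Lemma gram_kernel1 : gram_kernel (fun _ _ => 1).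
Proof.
exists [:: exist _ _ (separable_fun_cst 1)] => g h.
by rewrite big_seq1 /= rmorph1 mulr1.
Qed.

Lemma gram_kernel_rank1 F :
  separable_fun F -> gram_kernel (fun g h => F g * Num.conj (F h)).
Proof. by move=> sepF; exists [:: exist _ _ sepF] => g h; rewrite big_seq1. Qed.

Lemma gram_kernelD (K1 K2 : ('I_k -> G) -> ('I_k -> G) -> R[i]) :
  gram_kernel K1 -> gram_kernel K2 -> gram_kernel (fun g h => K1 g h + K2 g h).
Proof. by move=> [s1 H1] [s2 H2]; exists (s1 ++ s2) => g h; rewrite H1 H2 big_cat. Qed.

Lemma gram_kernelM (K1 K2 : ('I_k -> G) -> ('I_k -> G) -> R[i]) :
  gram_kernel K1 -> gram_kernel K2 -> gram_kernel (fun g h => K1 g h * K2 g h).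
Proof.
move=> [s1 H1] [s2 H2].
exists [seq exist _ _ (separable_funM (svalP p) (svalP q)) | p <- s1, q <- s2] => g h.
rewrite H1 H2 big_allpairs_dep mulr_suml; apply: eq_bigr => p _.
by rewrite mulr_sumr; apply: eq_bigr => q _ /=; rewrite rmorphM /=; ring.
Qed.

Lemma gram_kernel_sum (T : Type) (r : seq T) (P : pred T)
    (Ks : T -> ('I_k -> G) -> ('I_k -> G) -> R[i]) :
  (forall t, P t -> gram_kernel (Ks t)) ->
  gram_kernel (fun g h => \sum_(t <- r | P t) Ks t g h).
Proof.
move=> gramK; elim: r => [|t r IHr].
  by exists [::] => g h; rewrite !big_nil.
case Pt: (P t).
  by apply: gram_kernel_eq (gram_kernelD (gramK t Pt) IHr) => g h; rewrite big_cons Pt.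
by apply: gram_kernel_eq IHr => g h; rewrite big_cons Pt.
Qed.

Lemma gram_kernel_prod (T : Type) (r : seq T) (P : pred T)
    (Ks : T -> ('I_k -> G) -> ('I_k -> G) -> R[i]) :
  (forall t, P t -> gram_kernel (Ks t)) ->
  gram_kernel (fun g h => \prod_(t <- r | P t) Ks t g h).
Proof.
move=> gramK; elim: r => [|t r IHr].
  by apply: gram_kernel_eq gram_kernel1 => g h; rewrite big_nil.
case Pt: (P t).
  by apply: gram_kernel_eq (gram_kernelM (gramK t Pt) IHr) => g h; rewrite big_cons Pt.
by apply: gram_kernel_eq IHr => g h; rewrite big_cons Pt.
Qed.

End SeparableFunctions.

Section IteratedIntegral.
Variables (R : realType) (G : ptopologicalType) (mu : probability (borelG G) R).
Hypothesis compactG : compact [set: G].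
Variable one : G.
Local Notation ccfun := (ccfun R G).
Local Notation integral := (integral_Gk mu one).

Lemma integral_Gk_sepsum k (s : seq (R[i] * ('I_k -> ccfun))) :
  integral (sepsum s) = \sum_(p <- s) p.1 * \prod_(v < k) cintegral mu (p.2 v).
Proof.
elim: k s => [|k IHk] s.
  by apply: eq_bigr => p _; rewrite !big_ord0.
have slice x : integral (fun h => sepsum s (tcons x h)) =
    \sum_(p <- s) p.1 * p.2 ord0 x * \prod_(v < k) cintegral mu (p.2 (lift ord0 v)).
  pose s' := [seq (p.1 * p.2 ord0 x, fun v => p.2 (lift ord0 v))
               | p : R[i] * ('I_k.+1 -> ccfun) <- s].
  have -> : (fun h => sepsum s (tcons x h)) = sepsum s'.
    apply/funext => h; rewrite /sepsum big_map; apply: eq_bigr => p _ /=.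
    rewrite big_ord_recl /tcons unlift_none mulrA; congr (_ * _).
    by apply: eq_bigr => v _; rewrite liftK.
  by rewrite IHk big_map.
rewrite /= -/integral; under eq_fun do rewrite slice.
rewrite cintegral_sum //; last first.
  move=> p; apply: ccontinuousM; last exact: ccontinuous_cst.
  exact: ccontinuousM (ccontinuous_cst _ _) (ccfunP _).
apply: eq_bigr => p _.
under eq_fun do rewrite mulrAC.
by rewrite cintegralZl ?big_ord_recl //; [ring | apply: ccfunP].
Qed.

Lemma integral_Gk_eq_sepsum k (F : ('I_k -> G) -> R[i]) s : F =1 sepsum s ->
  integral F = \sum_(p <- s) p.1 * \prod_(v < k) cintegral mu (p.2 v).
Proof. by move=> /funext ->; apply: integral_Gk_sepsum. Qed.

Lemma integral_Gk_cst k c : integral (fun _ : 'I_k -> G => c) = c.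
Proof.
rewrite (@integral_Gk_eq_sepsum _ _ [:: (c, fun _ => ccfun_cst _ 1)]).
  by rewrite big_seq1 /= big1 ?mulr1 // => v _; apply: cintegral_cst.
by move=> g; rewrite /sepsum big_seq1 /= big1 ?mulr1.
Qed.

Lemma integral_GkD k (F1 F2 : ('I_k -> G) -> R[i]) :
  separable_fun F1 -> separable_fun F2 ->
  integral (fun g => F1 g + F2 g) = integral F1 + integral F2.
Proof.
move=> [s1 H1] [s2 H2].
rewrite (integral_Gk_eq_sepsum H1) (integral_Gk_eq_sepsum H2) -big_cat.
by apply: integral_Gk_eq_sepsum => g; rewrite H1 H2 /sepsum big_cat.
Qed.

Lemma integral_GkZl k c (F : ('I_k -> G) -> R[i]) :
  separable_fun F -> integral (fun g => c * F g) = c * integral F.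
Proof.
move=> [s H]; rewrite (integral_Gk_eq_sepsum H).
rewrite (@integral_Gk_eq_sepsum _ _ [seq (c * p.1, p.2) | p <- s]).
  by rewrite big_map mulr_sumr; apply: eq_bigr => p _; rewrite mulrA.
by move=> g; rewrite H /sepsum big_map mulr_sumr; apply: eq_bigr => p _; rewrite mulrA.
Qed.

Lemma integral_GkJ k (F : ('I_k -> G) -> R[i]) :
  separable_fun F -> integral (fun g => Num.conj (F g)) = Num.conj (integral F).
Proof.
move=> [s H]; rewrite (integral_Gk_eq_sepsum H).
rewrite (@integral_Gk_eq_sepsum _ _
    [seq (Num.conj p.1, fun v => CCFun (ccontinuousJ (ccfunP (p.2 v)))) | p <- s]).
  rewrite big_map rmorph_sum; apply: eq_bigr => p _ /=.
  rewrite rmorphM rmorph_prod; congr (_ * _); apply: eq_bigr => v _.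
  by apply: cintegralJ => //; apply: ccfunP.
by move=> g; rewrite H /sepsum big_map rmorph_sum; apply: eq_bigr => p _ /=;
  rewrite rmorphM rmorph_prod.
Qed.

Lemma integral_Gk_lin k (T : Type) (r : seq T) (c : T -> R[i])
    (Fs : T -> ('I_k -> G) -> R[i]) : (forall t, separable_fun (Fs t)) ->
  integral (fun g => \sum_(t <- r) c t * Fs t g) = \sum_(t <- r) c t * integral (Fs t).
Proof.
move=> sepF; elim: r => [|t r IHr].
  by under eq_fun do rewrite big_nil; rewrite big_nil integral_Gk_cst.
under eq_fun do rewrite big_cons.
rewrite integral_GkD ?integral_GkZl ?IHr ?big_cons //; first exact: separable_funZl.
by apply: separable_fun_sum => t' _; apply: separable_funZl.
Qed.

Lemma integral_Gk_comp_preserving k (phi : 'I_k -> G -> G) (F : ('I_k -> G) -> R[i]) :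
  (forall v, continuous (phi v)) ->
  (forall v (A : set (borelG G)), measurable A -> mu (phi v @^-1` A) = mu A) ->
  separable_fun F -> integral (fun g => F (fun v => phi v (g v))) = integral F.
Proof.
move=> cphi mu_phi [s H]; rewrite (integral_Gk_eq_sepsum H).
pose comp v (f : ccfun) : ccfun := CCFun (ccontinuous_comp (ccfunP f) (cphi v)).
rewrite (@integral_Gk_eq_sepsum _ _ [seq (p.1, fun v => comp v (p.2 v)) | p <- s]).
  rewrite big_map; apply: eq_bigr => p _ /=; congr (_ * _); apply: eq_bigr => v _.
  exact: (cintegral_comp_preserving compactG (cphi v) (mu_phi v) (ccfunP _)).
by move=> g; rewrite H /sepsum big_map.
Qed.

End IteratedIntegral.

Section PositiveTypeIntegrand.
Variables (R : realType) (G : ptopologicalType).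
Variables (mul : G -> G -> G) (inv : G -> G) (one : G).
Variable mu : probability (borelG G) R.
Hypothesis compactG : compact [set: G].
Hypothesis mul_cont : continuous (fun p : G * G => mul p.1 p.2).
Hypothesis mu_haar : is_normalized_Haar mul mu.
Hypotheses (inv1 : inv one = one) (mul1 : left_id one mul).
Local Notation integral := (integral_Gk mu one).

Lemma continuous_mull a : continuous (mul a).
Proof.
move=> x; apply: (@continuous2_cvg _ G G G (nbhs x) _ (fun=> a) id mul a x).
- exact: (@mul_cont (a, x)).
- exact: cvg_cst.
- exact: cvg_id.
Qed.

Theorem integral_Gk_ge0_of_gram k (F : ('I_k -> G) -> R[i]) :
  gram_kernel (fun g h => F (fun v => mul (inv (h v)) (g v))) -> 0 <= integral F.
Proof.
move=> [s Fgram].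
have F_sep : separable_fun F.
  apply: separable_fun_eq (separable_fun_sum s (fun p _ =>
    separable_funZl (Num.conj (sval p (fun _ => one))) (svalP p))) => g.
  have -> : F g = F (fun v => mul (inv one) (g v)).
    by congr F; apply/funext => v; rewrite inv1 mul1.
  by rewrite Fgram; apply: eq_bigr => p _; rewrite mulrC.
have translate h :
    integral F = \sum_(p <- s) Num.conj (sval p h) * integral (sval p).
  rewrite -(integral_Gk_comp_preserving compactG one (phi := fun v => mul (inv (h v))))
    //; first last.
  - by move=> v A mA; apply: mu_haar.
  - by move=> v; apply: continuous_mull.
  rewrite -integral_Gk_lin //; last by move=> p; apply: svalP.
  by congr integral; apply/funext => g; rewrite Fgram; apply: eq_bigr => p _; rewrite mulrC.
have -> : integral F =
    integral (fun h => \sum_(p <- s) integral (sval p) * Num.conj (sval p h)).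
  rewrite -[LHS](integral_Gk_cst mu compactG one k); congr integral.
  by apply/funext => h; rewrite (translate h); apply: eq_bigr => p _; rewrite mulrC.
rewrite integral_Gk_lin //; last by move=> p; apply: separable_funJ (svalP p).
apply: sumr_ge0 => p _; rewrite integral_GkJ //; last exact: svalP.
exact: mul_conjC_ge0.
Qed.

End PositiveTypeIntegrand.

Section GroupIdentities.
Variables (G : Type) (mul : G -> G -> G) (inv : G -> G) (one : G).
Hypothesis G_group : is_group mul inv one.

Lemma group_inv_uniq x y : mul x y = one -> y = inv x.
Proof. by case: G_group => mulA mul1 mul1r mulV _ xy1; rewrite -(mul1 y) -(mulV x) -mulA xy1 mul1r. Qed.

Lemma group_invM x y : inv (mul x y) = mul (inv y) (inv x).
Proof.
case: G_group => mulA _ mul1r _ mulrV; apply/esym/group_inv_uniq.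
by rewrite mulA -(mulA x y) mulrV mul1r mulrV.
Qed.

Lemma group_invK : involutive inv.
Proof. by case: G_group => _ _ _ mulV _ x; apply/esym/group_inv_uniq; apply: mulV. Qed.

Lemma group_inv1 : inv one = one.
Proof. by case: G_group => _ mul1 _ _ _; apply/esym/group_inv_uniq; apply: mul1. Qed.

End GroupIdentities.

Section UnitaryRepresentations.
Variable R : realType.

Lemma adjmxM m n p (A : 'M[R[i]]_(m, n)) (B : 'M[R[i]]_(n, p)) :
  adjmx (A *m B) = adjmx B *m adjmx A.
Proof. by rewrite /adjmx trmx_mul map_mxM. Qed.

Lemma adjmxK m n (A : 'M[R[i]]_(m, n)) : adjmx (adjmx A) = A.
Proof. by apply/matrixP => a b; rewrite !mxE conjCK. Qed.

Lemma mxtrace_mul_adjmx n (A B : 'M[R[i]]_n) :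
  \tr (A *m adjmx B) = \sum_a \sum_c A a c * Num.conj (B a c).
Proof. by apply: eq_bigr => a _; rewrite mxE; apply: eq_bigr => c _; rewrite !mxE. Qed.

Variables (G : ptopologicalType) (mul : G -> G -> G) (inv : G -> G) (one : G).
Hypothesis G_group : is_group mul inv one.
Variables (n : nat) (rho : G -> 'M[R[i]]_n).
Hypothesis rho_unitary : unitary_rep mul one rho.

Lemma unitary_rep_inv x : rho (inv x) = adjmx (rho x).
Proof.
case: rho_unitary => rhoM rho1 rhoU _.
have rhoV : rho x *m rho (inv x) = 1%:M by case: G_group => _ _ _ _ mulV; rewrite -rhoM mulV.
have adjV : adjmx (rho x) *m rho x = 1%:M by apply: mulmx1C; apply: rhoU.
by rewrite -[LHS]mul1mx -adjV -mulmxA rhoV mulmx1.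
Qed.

Lemma character_translate x1 x2 y1 y2 :
  character rho (mul (mul (inv y1) x1) (inv (mul (inv y2) x2))) =
  \sum_a \sum_c (rho x1 *m adjmx (rho x2)) a c * Num.conj ((rho y1 *m adjmx (rho y2)) a c).
Proof.
case: rho_unitary => rhoM _ _ _.
rewrite /character (group_invM G_group) (group_invK G_group) !rhoM !unitary_rep_inv.
rewrite -mxtrace_mul_adjmx adjmxM adjmxK.
by rewrite -!mulmxA mxtrace_mulC !mulmxA.
Qed.

Lemma separable_fun_rep_adjmx k (v w : 'I_k) a c :
  separable_fun (fun g : 'I_k -> G => (rho (g v) *m adjmx (rho (g w))) a c).
Proof.
case: rho_unitary => _ _ _ rho_cont.
apply: separable_fun_eq (separable_fun_sum (index_enum 'I_n) (fun b _ =>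
  separable_funM (separable_fun_coord v (CCFun (rho_cont a b)))
                 (separable_fun_coord w (CCFun (ccontinuousJ (rho_cont c b)))))) => g.
by rewrite mxE; apply: eq_bigr => b _; rewrite !mxE.
Qed.

Lemma gram_kernel_character k (v w : 'I_k) :
  gram_kernel (fun g h : 'I_k -> G =>
    character rho (mul (mul (inv (h v)) (g v)) (inv (mul (inv (h w)) (g w))))).
Proof.
apply: gram_kernel_eq (gram_kernel_sum _ (fun a _ => gram_kernel_sum _ (fun c _ =>
  gram_kernel_rank1 (separable_fun_rep_adjmx v w a c)))) => g h.
exact: character_translate.
Qed.

End UnitaryRepresentations.

Theorem corollary1 (R : realType) (G : ptopologicalType)
    (mul : G -> G -> G) (inv : G -> G) (one : G)
    (mu : probability (borelG G) R)
    (k : nat) (E : {set 'I_k * 'I_k})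
    (d : 'I_k * 'I_k -> nat) (rho : forall e : 'I_k * 'I_k, G -> 'M[R[i]]_(d e)) :
  is_compact_Lie_group R mul inv one ->
  is_normalized_Haar mul mu ->
  (forall e, e \in E -> (e.1 < e.2)%N) ->
  (forall e, e \in E -> unitary_rep mul one (rho e)) ->
  0 <= spin_network_eval mul inv one mu E rho.
Proof.
move=> [[G_group mul_cont _ compactG _] _] mu_haar _ rho_unitary.
have [_ mul1 _ _ _] := G_group.
apply: (integral_Gk_ge0_of_gram compactG mul_cont mu_haar (group_inv1 G_group) mul1).
apply: gram_kernel_prod => e eE.
exact: (gram_kernel_character G_group (rho_unitary e eE) e.1 e.2).
Qed.
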